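(* Let $\phi=\langle X,Q,D,C\rangle$ be a QCSP, let $x_i\in X$ be an existential variable ($Q_{x_i}=\exists$), and let $a\in D_{x_i}$ be such that $\textsl{s-fixable}^\phi(x_i,a)$ holds. Let $\phi'=\langle X,Q,D',C\rangle$ where $D'_{x_i}=\{a\}$ and $D'_{x_j}=D_{x_j}$ for all $j\ne i$. Then $\phi$ is true iff $\phi'$ is true.
   Context: Fix a finite set $\mathbb{D}$. For a finite set $V$ of variables, a $V$-tuple is a map $t:V\to\mathbb{D}$, written $x\mapsto t_x$; a $V$-relation is a set of $V$-tuples. A QCSP is a tuple $\phi=\langle X,Q,D,C\rangle$ where $X=\{x_1,\dots,x_n\}$ is a finite set of variables linearly ordered by index, $Q$ assigns to each $x_i$ a quantifier $Q_{x_i}\in\{\forall,\exists\}$, $D$ assigns to each $x_i$ a domain $D_{x_i}\subseteq\mathbb{D}$, and $C$ is a finite set of constraints, each being a $V$-relation for some $V\subseteq X$. For $V\subseteq X$, $\prod_{x\in V}D_x$ denotes the set of $V$-tuples $t$ with $t_x\in D_x$ for all $x\in V$; for $U\subseteq V$ and a $V$-tuple $t$, $t|_U$ is its restriction to $U$. Let $E=\{x_i:Q_{x_i}=\exists\}$, $A=\{x_i:Q_{x_i}=\forall\}$, $X_j=\{x_i:i\le j\}$ (so $X_0=\emptyset$), $A_j=A\cap X_j$. The set of solutions $\mathrm{sol}^\phi$ is the set of $t\in\prod_{x\in X}D_x$ such that $t|_V\in c$ for every $V$-relation $c\in C$. The QCSP $\phi$ is true if the sentence $Q_{x_1}x_1\in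 D_{x_1}\cdots Q_{x_n}x_n\in D_{x_n}.\ \bigwedge_{c\in C}c(\ldots)$ holds, with bounded quantifiers ranging over the listed domains and each constraint atom for a $V$-relation $c$ holding under assignment $t$ iff $t|_V\in c$. A strategy is a family $s=(s_{x_i})_{x_i\in E}$ of functions $s_{x_i}:\prod_{y\in A_{i-1}}D_y\to D_{x_i}$; its scenarios $\mathrm{sce}^\phi(s)$ are the $t\in\prod_{x\in X}D_x$ with $t_{x_i}=s_{x_i}(t|_{A_{i-1}})$ for every $x_i\in E$; $s$ is winning if $\mathrm{sce}^\phi(s)\subseteq\mathrm{sol}^\phi$; the set of outcomes is $\mathrm{out}^\phi=\bigcup_{s\text{ winning}}\mathrm{sce}^\phi(s)$. Shallow fixability: $\textsl{s-fixable}^\phi(x_i,a)$ iff $\forall t\in\mathrm{out}^\phi.\ \exists t'\in\mathrm{out}^\phi.\ t|_{X_{i-1}}=t'|_{X_{i-1}}\wedge t'_{x_i}=a$. *)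

From mathcomp Require Import all_boot.
Set Implicit Arguments. Unset Strict Implicit. Unset Printing Implicit Defensive.

(* Variables x_1..x_n are encoded as 'I_n (x_{i+1} ~ ordinal i), ordered by index.
   Partial tuples (V-tuples) are encoded as {ffun 'I_n -> option D}, with value
   None exactly outside V. A constraint is a pair (V, c) with c a V-relation. *)
Record qcsp (D : finType) (n : nat) := QCSP {
  qex : 'I_n -> bool;                (* true = existential, false = universal *)
  qdom : 'I_n -> {set D};
  qcons : seq ({set 'I_n} * {set {ffun 'I_n -> option D}})
}.

Section QCSPDefs.
Variables (D : finType) (n : nat).
Implicit Types (phi : qcsp D n).

Definition restrp (V : {set 'I_n}) (t : 'I_n -> option D) : {ffun 'I_n -> option D} :=
  [ffun x => if x \in V then t x else None].
Definition restr (V : {set 'I_n}) (t : {ffun 'I_n -> D}) : {ffun 'I_n -> option D} :=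
  restrp V (fun x => Some (t x)).

Definition in_prod phi (t : {ffun 'I_n -> D}) : Prop := forall x, t x \in qdom phi x.

Definition sat_constraints phi (t : 'I_n -> option D) : Prop :=
  forall Vc, Vc \in qcons phi -> restrp Vc.1 t \in Vc.2.

Definition is_sol phi (t : {ffun 'I_n -> D}) : Prop :=
  in_prod phi t /\ sat_constraints phi (fun x => Some (t x)).

Definition upd (t : 'I_n -> option D) (x : 'I_n) (a : D) : 'I_n -> option D :=
  fun y => if y == x then Some a else t y.

Fixpoint qeval phi (s : seq 'I_n) (t : 'I_n -> option D) : Prop :=
  match s with
  | [::] => sat_constraints phi t
  | x :: s' =>
      if qex phi x then exists2 a, a \in qdom phi x & qeval phi s' (upd t x a)
      else forall a, a \in qdom phi x -> qeval phi s' (upd t x a)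
  end.

(* enum 'I_n lists the variables in increasing index order *)
Definition qtrue phi : Prop := qeval phi (enum 'I_n) (fun _ => None).

Definition Aprev phi (x : 'I_n) : {set 'I_n} :=
  [set y : 'I_n | (y < x)%N && ~~ qex phi y].

Definition in_prodV phi (V : {set 'I_n}) (u : {ffun 'I_n -> option D}) : Prop :=
  forall y, if y \in V then exists2 d, u y = Some d & d \in qdom phi y
            else u y = None.

(* strategy: for each existential x, a function from A_{i-1}-tuples to D_x *)
Definition strategy := 'I_n -> {ffun 'I_n -> option D} -> D.

Definition is_strategy phi (s : strategy) : Prop :=
  forall x, qex phi x -> forall u, in_prodV phi (Aprev phi x) u -> s x u \in qdom phi x.

Definition scenario phi (s : strategy) (t : {ffun 'I_n -> D}) : Prop :=
  in_prod phi t /\ forall x, qex phi x -> t x = s x (restr (Aprev phi x) t).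

Definition winning phi (s : strategy) : Prop :=
  is_strategy phi s /\ forall t, scenario phi s t -> is_sol phi t.

Definition outcome phi (t : {ffun 'I_n -> D}) : Prop :=
  exists2 s, winning phi s & scenario phi s t.

Definition s_fixable phi (x : 'I_n) (a : D) : Prop :=
  forall t, outcome phi t ->
    exists2 t', outcome phi t' &
      (forall y : 'I_n, (y < x)%N -> t y = t' y) /\ t' x = a.

Definition fix_dom phi (x : 'I_n) (a : D) : qcsp D n :=
  QCSP (qex phi) (fun y => if y == x then [set a] else qdom phi y) (qcons phi).

End QCSPDefs.

(* The proof works with positions of the evaluation game: wins psi k t says
   that the sentence remaining after the first k values of the tuple t have
   been played holds.  Two bridges connect positions with strategies:
   - soundness: every prefix of an outcome is a won position
     (outcome_wins), since plays consistent with a winning strategy stay won;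
   - completeness: if all prefixes of t up to k are won, some outcome agrees
     with t before k (outcome_through_prefix).  The outcome is produced by a
     greedy strategy which keeps positions won and copies t whenever that
     is safe.
   With these, the main lemma (fixable_prefix_wins) climbs down from x:
   at x, extend the current position to an outcome, redirect it through
   x = a by fixability, and read off that the position after x = a is won;
   before x, phi and phi' have the same quantifiers and domains.  Since
   phi' is phi with a smaller domain, one direction is monotonicity; the
   degenerate case of an empty domain is settled by the first variable with
   an empty domain, which is the same for phi and phi'. *)

From Stdlib Require Import FunctionalExtensionality ClassicalEpsilon.
From mathcomp Require Import all_boot.
Set Implicit Arguments. Unset Strict Implicit. Unset Printing Implicit Defensive.

Lemma downward_ind (P : nat -> Prop) (N : nat) :
  P N -> (forall k, k < N -> P k.+1 -> P k) -> forall k, k <= N -> P k.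
Proof.
move=> PN step k; move Em: (N - k) => m; elim: m k Em => [|m IH] k Em kN.
  by have -> : k = N by apply/eqP; rewrite eqn_leq kN -subn_eq0 Em.
have kN' : k < N by rewrite -subn_gt0 Em.
by apply: step (IH _ _ kN') => //; rewrite subnS Em.
Qed.

Section Positions.
Variables (D : finType) (n : nat).
Implicit Types (psi : qcsp D n) (t : {ffun 'I_n -> D}).

Lemma drop_enum_ord (o : 'I_n) : drop o (enum 'I_n) = o :: drop o.+1 (enum 'I_n).
Proof.
rewrite (drop_nth o) ?size_enum_ord //; congr (_ :: _).
by apply: val_inj; rewrite /= nth_enum_ord.
Qed.

Lemma mem_drop_enum k (y : 'I_n) : y \in drop k (enum 'I_n) -> k <= y.
Proof.
move=> yk; have: val y \in map val (drop k (enum 'I_n)) by apply: map_f.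
by rewrite map_drop val_enum_ord drop_iota mem_iota add0n => /andP[].
Qed.

Definition prefix (t : 'I_n -> D) (k : nat) : 'I_n -> option D :=
  fun y => if y < k then Some (t y) else None.

Definition set_at t (o : 'I_n) (d : D) : {ffun 'I_n -> D} :=
  [ffun y => if y == o then d else t y].

Definition wins psi (k : nat) (t : 'I_n -> D) : Prop :=
  qeval psi (drop k (enum 'I_n)) (prefix t k).

Lemma prefix_ext (t t' : 'I_n -> D) k :
  (forall y : 'I_n, y < k -> t y = t' y) -> prefix t k = prefix t' k.
Proof.
by move=> tt'; apply: functional_extensionality => y; rewrite /prefix; case: ifP => // /tt' ->.
Qed.

Lemma wins_ext psi k (t t' : 'I_n -> D) :
  (forall y : 'I_n, y < k -> t y = t' y) -> wins psi k t -> wins psi k t'.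
Proof. by move=> tt'; rewrite /wins (prefix_ext tt'). Qed.

Lemma set_at_lt t (o y : 'I_n) d : y < o -> set_at t o d y = t y.
Proof. by move=> yo; rewrite ffunE; case: eqVneq yo => [->|]; rewrite ?ltnn. Qed.

Lemma wins_set_at_lt psi k t (o : 'I_n) d : k <= o -> wins psi k t -> wins psi k (set_at t o d).
Proof. by move=> ko; apply: wins_ext => y yk; rewrite set_at_lt // (leq_trans yk). Qed.

Lemma wins_set_at_ext psi t t' (o : 'I_n) d :
  (forall y : 'I_n, y < o -> t y = t' y) ->
  wins psi o.+1 (set_at t o d) -> wins psi o.+1 (set_at t' o d).
Proof.
move=> tt'; apply: wins_ext => y; rewrite ltnS leq_eqVlt !ffunE.
by case/orP => [/eqP/val_inj -> | /tt' ->]; rewrite ?eqxx.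
Qed.

Lemma set_at_id t o : set_at t o (t o) = t.
Proof. by apply/ffunP => y; rewrite ffunE; case: eqVneq => [->|]. Qed.

Lemma in_prod_set_at psi t o d :
  in_prod psi t -> d \in qdom psi o -> in_prod psi (set_at t o d).
Proof. by move=> Ht Hd y; rewrite ffunE; case: eqVneq => [->|]. Qed.

Lemma upd_prefix t (o : 'I_n) :
  upd (prefix t o) o = fun d => prefix (set_at t o d) o.+1.
Proof.
apply: functional_extensionality => d; apply: functional_extensionality => y.
rewrite /upd /prefix ffunE ltnS; case: eqVneq => [->|yo]; first by rewrite leqnn.
rewrite [y <= o]leq_eqVlt.
by have -> : (y == o :> nat) = false by apply: contraNF yo => /eqP/val_inj ->.
Qed.

Lemma in_prodV_restr psi (V : {set 'I_n}) t :
  in_prod psi t -> in_prodV psi V (restr V t).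
Proof. by move=> Ht y; rewrite ffunE; case: (y \in V) => //; exists (t y). Qed.

Lemma wins_step psi (o : 'I_n) t :
  wins psi o t =
  if qex psi o then exists2 d, d \in qdom psi o & wins psi o.+1 (set_at t o d)
  else forall d, d \in qdom psi o -> wins psi o.+1 (set_at t o d).
Proof. by rewrite /wins drop_enum_ord /= upd_prefix. Qed.

Lemma wins_n psi t : wins psi n t = sat_constraints psi (fun y => Some (t y)).
Proof.
rewrite /wins drop_oversize ?size_enum_ord //=; congr sat_constraints.
by apply: functional_extensionality => y; rewrite /prefix ltn_ord.
Qed.

Lemma wins_0 psi t : wins psi 0 t = qtrue psi.
Proof.
by rewrite /wins drop0; congr qeval; apply: functional_extensionality.
Qed.

End Positions.

Section Soundness.
Variables (D : finType) (n : nat) (psi : qcsp D n) (s : strategy D n).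

Definition consistent (k : nat) (t : {ffun 'I_n -> D}) : Prop :=
  forall y, qex psi y -> y < k -> t y = s y (restr (Aprev psi y) t).

Lemma restr_Aprev_set_at (y o : 'I_n) (t : {ffun 'I_n -> D}) d :
  y <= o -> restr (Aprev psi y) (set_at t o d) = restr (Aprev psi y) t.
Proof.
move=> yo; apply/ffunP => z; rewrite [LHS]ffunE [RHS]ffunE; case: ifP => //.
by rewrite inE => /andP[zy _]; rewrite set_at_lt // (leq_trans zy yo).
Qed.

Lemma consistent_set_at (o : 'I_n) (t : {ffun 'I_n -> D}) d :
  consistent o t -> (qex psi o -> d = s o (restr (Aprev psi o) t)) ->
  consistent o.+1 (set_at t o d).
Proof.
move=> Ht Hd y ey; rewrite ltnS leq_eqVlt => /orP[/eqP/val_inj yo | yo].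
  by subst y; rewrite restr_Aprev_set_at // ffunE eqxx (Hd ey).
by rewrite set_at_lt // Ht // restr_Aprev_set_at // ltnW.
Qed.

Lemma winning_consistent_wins : winning psi s ->
  forall k, k <= n -> forall t, in_prod psi t -> consistent k t -> wins psi k t.
Proof.
case=> s_dom s_win; apply: downward_ind => [t Ht Hc | k kn IH t Ht Hc].
  have [_ sat] := s_win t (conj Ht (fun y ey => Hc y ey (ltn_ord y))).
  by rewrite wins_n.
pose o := Ordinal kn; rewrite -[k]/(val o) wins_step.
case eo: (qex psi o).
- have s_o : s o (restr (Aprev psi o) t) \in qdom psi o.
    by apply: s_dom => //; apply: in_prodV_restr.
  exists (s o (restr (Aprev psi o) t)) => //.
  by apply: IH; [exact: in_prod_set_at | exact: (consistent_set_at (o := o))].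
- move=> d Hd; apply: IH; first exact: in_prod_set_at.
  by apply: (consistent_set_at (o := o)) => //; rewrite eo.
Qed.

End Soundness.

Lemma outcome_wins (D : finType) (n : nat) (psi : qcsp D n) (t : {ffun 'I_n -> D}) k :
  outcome psi t -> k <= n -> wins psi k t.
Proof.
case=> s s_win [Ht Hs] kn; apply: (winning_consistent_wins s_win kn Ht).
by move=> y ey _; apply: Hs.
Qed.

Section GreedyStrategy.
Variables (D : finType) (n : nat) (psi : qcsp D n) (t0 : {ffun 'I_n -> D}).
Implicit Types (t : {ffun 'I_n -> D}) (w : {ffun 'I_n -> option D}).

Definition good_move (o : 'I_n) t (d : D) : Prop :=
  [/\ d \in qdom psi o,
      wins psi o.+1 (set_at t o (t0 o)) -> d = t0 o &
      (exists2 e, e \in qdom psi o & wins psi o.+1 (set_at t o e)) ->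
        wins psi o.+1 (set_at t o d)].

Definition greedy (o : 'I_n) t : D := epsilon (inhabits (t0 o)) (good_move o t).

Definition move w (o : 'I_n) t : D :=
  if qex psi o then greedy o t else odflt (t0 o) (w o).

Fixpoint play w (j : nat) : {ffun 'I_n -> D} :=
  if j is j'.+1 then
    let t := play w j' in
    if insub j' is Some o then set_at t o (move w o t) else t
  else t0.

Definition greedy_strategy : strategy D n := fun y w => greedy y (play w y).

Lemma play_succ w j :
  play w j.+1 = if insub j is Some o then set_at (play w j) o (move w o (play w j)) else play w j.
Proof. by []. Qed.

Lemma play_step w (o : 'I_n) : play w o.+1 = set_at (play w o) o (move w o (play w o)).
Proof. by rewrite /= valK. Qed.

Lemma play_stable w j m (y : 'I_n) : y < j -> play w (j + m) y = play w j y.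
Proof.
move=> yj; elim: m => [|m IH]; first by rewrite addn0.
rewrite addnS /=; case: insubP => [o _ oj|_] //.
by rewrite set_at_lt // oj (leq_trans yj) ?leq_addr.
Qed.

Lemma play_ext w w' j :
  (forall y : 'I_n, ~~ qex psi y -> y < j -> w y = w' y) -> play w j = play w' j.
Proof.
elim: j => [|j IH] //= ww'.
rewrite IH; last by move=> y ey yj; apply: ww' => //; exact: ltnW.
case: insubP => [o _ oj|_] //; rewrite /move; case eo: (qex psi o) => //.
by rewrite ww' ?eo // oj.
Qed.

Hypothesis t0_prod : in_prod psi t0.

(* A good move exists: t0 o if it keeps the position won, otherwise a
   winning move if there is one, otherwise t0 o again. *)
Lemma greedy_good (o : 'I_n) t : good_move o t (greedy o t).
Proof.
apply: epsilon_spec.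
have [w0|nw0] := classic (wins psi o.+1 (set_at t o (t0 o))).
  by exists (t0 o); split.
have [[e He we]|ne] := classic (exists2 e, e \in qdom psi o & wins psi o.+1 (set_at t o e)).
  by exists e; split.
by exists (t0 o); split.
Qed.

Lemma greedy_strategy_is_strategy : is_strategy psi greedy_strategy.
Proof. by move=> y _ w _; have [] := greedy_good y (play w y). Qed.

Lemma play_scenario t : scenario psi greedy_strategy t ->
  forall j w, (forall y : 'I_n, ~~ qex psi y -> y < j -> w y = Some (t y)) ->
  forall y : 'I_n, y < j -> play w j y = t y.
Proof.
move=> [_ t_greedy]; elim=> [|j IH] w wt y //=.
have wt' : forall z : 'I_n, ~~ qex psi z -> z < j -> w z = Some (t z).
  by move=> z ez zj; apply: wt => //; exact: ltnW.
case: insubP => [o _ oj|jn _]; last first.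
  by apply: (IH w wt' y); rewrite -leqNgt in jn; exact: leq_trans (ltn_ord y) jn.
rewrite ltnS leq_eqVlt => /orP[/eqP yj | yj]; last by rewrite set_at_lt ?oj // IH.
have -> : y = o by apply: val_inj; rewrite /= yj oj.
rewrite -oj in wt' *; rewrite ffunE eqxx /move; case eo: (qex psi o); last by rewrite wt ?eo // -oj.
rewrite t_greedy //; apply: congr1.
apply: play_ext => z ez zo; rewrite ffunE wt' //.
by rewrite inE zo ez.
Qed.

Lemma greedy_strategy_winning : qtrue psi -> winning psi greedy_strategy.
Proof.
move=> psi_true; split; first exact: greedy_strategy_is_strategy.
move=> t t_scen; have [t_prod t_greedy] := t_scen.
suff: forall k, k <= n -> wins psi k t by move/(_ n (leqnn n)); rewrite wins_n.
elim=> [|k IH] kn; first by rewrite wins_0.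
pose o := Ordinal kn; move: (IH (ltnW kn)); rewrite -[k]/(val o) wins_step.
case eo: (qex psi o); last by move/(_ (t o) (t_prod o)); rewrite set_at_id.
move=> won; pose T := play (restr (Aprev psi o) t) o.
have T_t : forall y : 'I_n, y < o -> T y = t y.
  by apply: play_scenario => // z ez zo; rewrite ffunE inE zo ez.
have tT : t o = greedy o T by rewrite t_greedy.
have [_ _ greedy_wins] := greedy_good o T.
have [d d_dom won_d] := won.
have won_T : wins psi o.+1 (set_at T o d) by apply: wins_set_at_ext won_d => y /T_t ->.
rewrite -(set_at_id t o) tT; apply: wins_set_at_ext T_t _.
by apply: greedy_wins; exists d.
Qed.

Definition default_universals : {ffun 'I_n -> option D} := [ffun y => Some (t0 y)].
Definition default_play : {ffun 'I_n -> D} := play default_universals n.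

Lemma default_play_move (y : 'I_n) :
  default_play y = move default_universals y (play default_universals y).
Proof.
have := play_stable default_universals (n - y.+1) (ltnSn y).
by rewrite subnKC // /default_play => ->; rewrite play_step ffunE eqxx.
Qed.

Lemma default_play_scenario : scenario psi greedy_strategy default_play.
Proof.
have default_univ y : ~~ qex psi y -> default_play y = t0 y.
  by move=> ey; rewrite default_play_move /move (negbTE ey) ffunE.
split=> y; rewrite default_play_move /move.
  case: ifP => _; first by have [] := greedy_good y (play default_universals y).
  by rewrite /default_universals ffunE; exact (t0_prod y).
move=> ey; rewrite ey; apply: congr1; apply: play_ext => z ez zy.
by rewrite !ffunE inE zy ez /= default_univ.
Qed.

Lemma default_play_prefix k : k <= n -> (forall j, j <= k -> wins psi j t0) ->
  forall y : 'I_n, y < k -> default_play y = t0 y.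
Proof.
move=> kn t0_wins.
have play_t0 j : j <= k -> play default_universals j = t0.
  elim: j => [_|j IH jk]; first reflexivity.
  rewrite play_succ IH; last exact: ltnW.
  case: insubP => [o _ oj|_]; last reflexivity.
  rewrite /move; case: ifP => _; last by rewrite ffunE set_at_id.
  have [_ greedy_t0 _] := greedy_good o t0.
  rewrite greedy_t0; first exact: set_at_id.
  by rewrite set_at_id oj; exact: (t0_wins _ jk).
move=> y yk; have := play_stable default_universals (n - k) yk.
by rewrite subnKC // /default_play => ->; rewrite play_t0.
Qed.

End GreedyStrategy.

Lemma outcome_through_prefix (D : finType) (n : nat) (psi : qcsp D n)
    (t : {ffun 'I_n -> D}) k :
  qtrue psi -> in_prod psi t -> k <= n -> (forall j, j <= k -> wins psi j t) ->
  exists2 t', outcome psi t' & forall y : 'I_n, y < k -> t' y = t y.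
Proof.
move=> psi_true t_prod kn t_wins; exists (default_play psi t).
  exists (greedy_strategy psi t); last exact: default_play_scenario.
  exact: greedy_strategy_winning.
exact: default_play_prefix.
Qed.

Section FixedDomain.
Variables (D : finType) (n : nat) (phi : qcsp D n) (x : 'I_n) (a : D).

Lemma qeval_fix_dom_weaken s q : qex phi x -> a \in qdom phi x ->
  qeval (fix_dom phi x a) s q -> qeval phi s q.
Proof.
move=> ex ax; elim: s q => [|y s IH] q //=.
case: eqVneq => [->|_]; first by rewrite ex => -[d]; rewrite inE => /eqP -> /IH; exists a.
case: ifP => _; first by case=> d Hd /IH; exists d.
by move=> H d Hd; apply: IH; apply: H.
Qed.

Lemma qeval_fix_dom_off s q : x \notin s ->
  qeval (fix_dom phi x a) s q <-> qeval phi s q.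
Proof.
elim: s q => [|y s IH] q //=; rewrite in_cons negb_or eq_sym => /andP[/negbTE -> /IH {}IH].
case: ifP => _; split.
- by case=> d Hd /IH; exists d.
- by case=> d Hd /IH; exists d.
- by move=> H d /H/IH.
- by move=> H d /H/IH.
Qed.

Lemma wins_fix_dom_after k (t : 'I_n -> D) : x < k ->
  wins (fix_dom phi x a) k t <-> wins phi k t.
Proof.
by move=> xk; apply: qeval_fix_dom_off; apply/negP => /mem_drop_enum; rewrite leqNgt xk.
Qed.

Lemma fix_dom_empty y : a \in qdom phi x ->
  (qdom (fix_dom phi x a) y == set0) = (qdom phi y == set0).
Proof.
move=> ax /=; case: (eqVneq y x) => [->|//].
have nonempty (A : {set D}) : a \in A -> (A == set0) = false.
  by move=> aA; apply/negbTE/set0Pn; exists a.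
by rewrite !nonempty ?set11.
Qed.
End FixedDomain.

Section EmptyDomains.
Variables (D : finType) (n : nat) (psi : qcsp D n).

Lemma prod_or_first_empty :
  (exists t, in_prod psi t) \/
  exists z : 'I_n, qdom psi z = set0 /\ forall y : 'I_n, y < z -> qdom psi y != set0.
Proof.
case: (boolP [forall y, qdom psi y != set0]) => [/forallP nonempty | /forallPn[y0]].
  left; exists [ffun y => xchoose (set0Pn _ (nonempty y))].
  by move=> y; rewrite ffunE (xchooseP (set0Pn _ (nonempty y))).
rewrite negbK => empty0; right.
case: (@arg_minnP _ y0 (fun y => qdom psi y == set0) val empty0) => z /eqP empty_z z_min.
by exists z; split=> // y; apply: contraTN => /z_min; rewrite -leqNgt.
Qed.

(* If z is the first variable with an empty domain, the sentence holds
   exactly when z is universal: all earlier domains are inhabited, so the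
   game reaches z, where an existential move is impossible while a
   universal one makes the rest vacuous. *)
Lemma qtrue_first_empty (z : 'I_n) : qdom psi z = set0 ->
  (forall y : 'I_n, y < z -> qdom psi y != set0) -> (qtrue psi <-> ~~ qex psi z).
Proof.
move=> empty_z nonempty.
suff: forall k, k <= z -> forall q, qeval psi (drop k (enum 'I_n)) q <-> ~~ qex psi z.
  by move/(_ 0 (leq0n _) (fun _ => None)); rewrite drop0.
apply: downward_ind => [q | k kz IH q].
  rewrite drop_enum_ord /= empty_z.
  case: (qex psi z); split=> //; first by case=> d; rewrite inE.
  by move=> _ d; rewrite inE.
have kn : k < n by exact: ltn_trans kz (ltn_ord z).
pose o := Ordinal kn; rewrite -[k]/(val o) drop_enum_ord /=.
have [d Hd] := set0Pn _ (nonempty o kz).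
case: (qex psi o); split.
- by case=> e _ /IH.
- by move/IH => win; exists d.
- by move/(_ d Hd)/IH.
- by move=> win e _; apply/IH.
Qed.

End EmptyDomains.

Section Fixability.
Variables (D : finType) (n : nat) (phi : qcsp D n) (x : 'I_n) (a : D).
Hypotheses (x_ex : qex phi x) (a_dom : a \in qdom phi x) (x_fix : s_fixable phi x a).
Hypothesis phi_true : qtrue phi.

(* At x itself this is where fixability is used:
   the position extends to an outcome, which can be redirected through
   x = a into another outcome, whose next position is won. *)
Lemma fixable_prefix_wins k : k <= x -> forall t, in_prod phi t ->
  (forall j, j <= k -> wins phi j t) -> wins (fix_dom phi x a) k t.
Proof.
move: k; apply: downward_ind => [t t_prod t_wins | k kx IH t t_prod t_wins].
  have [t1 t1_out t1_t] := outcome_through_prefix phi_true t_prod (ltnW (ltn_ord x)) t_wins.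
  have [t' t'_out [t'_t1 t'_x]] := x_fix t1_out.
  rewrite wins_step /= eqxx x_ex; exists a; first by rewrite inE.
  apply/wins_fix_dom_after => //; apply: wins_ext (outcome_wins t'_out (ltn_ord x)) => y.
  rewrite ltnS leq_eqVlt => /orP[/eqP/val_inj -> | yx]; first by rewrite ffunE eqxx.
  by rewrite set_at_lt // -t'_t1 // t1_t.
have kn : k < n by exact: ltn_trans kx (ltn_ord x).
pose o := Ordinal kn; have ox : (o == x) = false by apply: contraTF kx => /eqP <-; rewrite ltnn.
have set_at_wins d : wins phi o.+1 (set_at t o d) ->
    forall j, j <= o.+1 -> wins phi j (set_at t o d).
  move=> won j; rewrite leq_eqVlt ltnS => /orP[/eqP -> // | jo].
  exact/wins_set_at_lt/t_wins.
move: (t_wins k (leqnn k)); rewrite -[k]/(val o) !wins_step /= ox.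
case: (qex phi o) => [[d Hd won] | won].
  by exists d => //; apply: IH; [exact: in_prod_set_at | exact: set_at_wins].
by move=> d Hd; apply: IH; [exact: in_prod_set_at | exact/set_at_wins/won].
Qed.

End Fixability.

Theorem proposition7 (D : finType) (n : nat) (phi : qcsp D n) (x : 'I_n) (a : D) :
  qex phi x -> a \in qdom phi x -> s_fixable phi x a ->
  (qtrue phi <-> qtrue (fix_dom phi x a)).
Proof.
move=> x_ex a_dom x_fix; split; last exact: qeval_fix_dom_weaken.
move=> phi_true; have [[t t_prod] | [z [empty_z nonempty]]] := prod_or_first_empty phi.
  rewrite -(wins_0 _ t); apply: fixable_prefix_wins => // j; rewrite leqn0 => /eqP ->.
  by rewrite wins_0.
have empty_z' : qdom (fix_dom phi x a) z = set0 by apply/eqP; rewrite fix_dom_empty // empty_z.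
have nonempty' (y : 'I_n) : y < z -> qdom (fix_dom phi x a) y != set0 by rewrite fix_dom_empty //; exact: nonempty.
by apply/(qtrue_first_empty empty_z' nonempty'); apply/(qtrue_first_empty empty_z nonempty).
Qed.
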